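(* Let $X, Y \subseteq \omega$. There exists an embedding $\mathcal{B}^X \hookrightarrow \mathcal{B}^Y$ if and only if $X \le_T Y$.
   Context: A pca is a set with a partial binary application operation containing distinct $\mathrm{s},\mathrm{k}$ with $\mathrm{k}ab\downarrow=a$, $\mathrm{s}ab\downarrow$, $\mathrm{s}abc\simeq(ac)(bc)$. An embedding of pcas is an injective map $f$ with: if $ab$ is defined then $f(a)f(b)$ is defined and equals $f(ab)$. $\mathcal{B}^Z$: elements are the partial $Z$-computable functions $\omega\rightharpoonup\omega$, with $\varphi\cdot\psi$ the partial function $n\mapsto\Phi^{\varphi\oplus\psi}_{\varphi(0)}(n)$, where $\Phi_e$ is the $e$-th Turing functional, $(\varphi\oplus\psi)(2n)\simeq\varphi(n)$, $(\varphi\oplus\psi)(2n+1)\simeq\psi(n)$, and querying the oracle at an undefined point diverges. *)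

From HB Require Import structures.
From mathcomp Require Import all_boot.
Set Implicit Arguments. Unset Strict Implicit. Unset Printing Implicit Defensive.

Definition pfun := nat -> option nat.

Inductive code : Type :=
| cZero
| cSucc
| cProj (i : nat)
| cOracle
| cComp (g : code) (hs : seq code)
| cPrec (b s : code)
| cMu (g : code).

Inductive eval (f : pfun) : code -> seq nat -> nat -> Prop :=
| ev_zero args : eval f cZero args 0
| ev_succ x args : eval f cSucc (x :: args) x.+1
| ev_proj i args : i < size args -> eval f (cProj i) args (nth 0 args i)
| ev_oracle x args v : f x = Some v -> eval f cOracle (x :: args) v
| ev_comp g hs args ys v :
    evals f hs args ys -> eval f g ys v -> eval f (cComp g hs) args v
| ev_prec0 b s args v : eval f b args v -> eval f (cPrec b s) (0 :: args) v
| ev_precS b s n args w v :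
    eval f (cPrec b s) (n :: args) w -> eval f s (n :: w :: args) v ->
    eval f (cPrec b s) (n.+1 :: args) v
| ev_mu g n args :
    eval f g (n :: args) 0 ->
    (forall m, m < n -> exists k, eval f g (m :: args) k.+1) ->
    eval f (cMu g) args n
with evals (f : pfun) : seq code -> seq nat -> seq nat -> Prop :=
| evs_nil args : evals f [::] args [::]
| evs_cons h hs args y ys :
    eval f h args y -> evals f hs args ys -> evals f (h :: hs) args (y :: ys).

(** Effective Goedel numbering of codes via MathComp's countable GenTree encoding. *)
Fixpoint code_enc (c : code) : GenTree.tree nat :=
  match c with
  | cZero => GenTree.Node 0 [::]
  | cSucc => GenTree.Node 1 [::]
  | cProj i => GenTree.Node 2 [:: GenTree.Leaf i]
  | cOracle => GenTree.Node 3 [::]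
  | cComp g hs => GenTree.Node 4 (code_enc g :: map code_enc hs)
  | cPrec b s => GenTree.Node 5 [:: code_enc b; code_enc s]
  | cMu g => GenTree.Node 6 [:: code_enc g]
  end.

Fixpoint code_dec (t : GenTree.tree nat) : code :=
  match t with
  | GenTree.Node 1 [::] => cSucc
  | GenTree.Node 2 [:: GenTree.Leaf i] => cProj i
  | GenTree.Node 3 [::] => cOracle
  | GenTree.Node 4 (t :: ts) => cComp (code_dec t) (map code_dec ts)
  | GenTree.Node 5 [:: t1; t2] => cPrec (code_dec t1) (code_dec t2)
  | GenTree.Node 6 [:: t] => cMu (code_dec t)
  | _ => cZero
  end.

Fixpoint code_ind2 (P : code -> Prop)
  (H0 : P cZero) (H1 : P cSucc) (H2 : forall i, P (cProj i)) (H3 : P cOracle)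
  (H4 : forall g hs, P g -> foldr (fun x acc => P x /\ acc) True hs -> P (cComp g hs))
  (H5 : forall b s, P b -> P s -> P (cPrec b s))
  (H6 : forall g, P g -> P (cMu g)) (c : code) {struct c} : P c :=
  let rec := code_ind2 H0 H1 H2 H3 H4 H5 H6 in
  match c with
  | cZero => H0
  | cSucc => H1
  | cProj i => H2 i
  | cOracle => H3
  | cComp g hs => H4 g hs (rec g)
      ((fix F (l : seq code) : foldr (fun x acc => P x /\ acc) True l :=
          match l with
          | [::] => I
          | x :: l' => conj (rec x) (F l')
          end) hs)
  | cPrec b s => H5 b s (rec b) (rec s)
  | cMu g => H6 g (rec g)
  end.

Lemma code_encK : cancel code_enc code_dec.
Proof.
elim/code_ind2 => //= [g hs IHg IHhs|b s -> ->|g ->] //.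
rewrite IHg; congr cComp; rewrite -map_comp.
elim: hs IHhs => //= x l IH [Hx /IH ->]; by rewrite Hx.
Qed.

HB.instance Definition _ := Countable.copy code (can_type code_encK).

Definition Phi (f : pfun) (e n v : nat) : Prop :=
  match (unpickle e : option code) with
  | Some c => eval f c [:: n] v
  | None => False
  end.

Definition chi (Z : nat -> bool) : pfun := fun n => Some (nat_of_bool (Z n)).

Definition Zcomputable (Z : nat -> bool) (phi : pfun) : Prop :=
  exists e, forall n v, phi n = Some v <-> Phi (chi Z) e n v.

Definition turing_le (X Y : nat -> bool) : Prop := Zcomputable Y (chi X).

Definition pjoin (phi psi : pfun) : pfun :=
  fun m => if odd m then psi m./2 else phi m./2.

Definition BZ (Z : nat -> bool) := {phi : pfun | Zcomputable Z phi}.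

Definition appR (phi psi : pfun) (n v : nat) : Prop :=
  exists e, phi 0 = Some e /\ Phi (pjoin phi psi) e n v.

Definition is_app (phi psi c : pfun) : Prop :=
  forall n v, c n = Some v <-> appR phi psi n v.

Definition pca_embedding (X Y : nat -> bool) (f : BZ X -> BZ Y) : Prop :=
  injective f /\
  forall a b c : BZ X, is_app (sval a) (sval b) (sval c) ->
    is_app (sval (f a)) (sval (f b)) (sval (f c)).

From Stdlib Require Import ProofIrrelevance FunctionalExtensionality Classical.
From mathcomp Require Import all_boot zify.
Set Implicit Arguments. Unset Strict Implicit. Unset Printing Implicit Defensive.

(* Relativization gives one direction: replacing every oracle call of an X-code
   by a Y-code computing X turns X-computable functions into Y-computable ones, so
   the identity on underlying functions embeds B^X into B^Y.

   Conversely, let f : B^X -> B^Y be an embedding.  In B^X the constant functions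
   [num n], an element [succ_elt] with [succ_elt . num n = num n.+1], and elements
   [flip b] with [flip b . num n = num (X n (+) b)] are X-computable, and f
   preserves these equations.  Application in B^Y is uniformly computable on codes,
   so Y computes, uniformly in n and b, a code of f (num (X n (+) b)).  As f is
   injective, f (num 0) and f (num 1) differ at some m: one of them, f (num bb),
   maps m to some w and the other does not.  Hence f (num (X n (+) b)) maps m to w
   exactly when X n = bb (+) b, and X n is found by an unbounded search for a
   computation trace certifying this for b = false or b = true.  Traces are
   Goedel-numbered and checked by a primitive recursive test, written in a small
   language of primitive recursive expressions compiled to codes. *)

(** * Evaluation *)

(* [eval_ind] gives no induction hypothesis for the [evals] premise of [ev_comp]
   nor under the existential of [ev_mu]. *)
Section EvalInduction.
Variable f : pfun.
Variable P : code -> seq nat -> nat -> Prop.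
Variable Q : seq code -> seq nat -> seq nat -> Prop.
Hypothesis Pzero : forall args, P cZero args 0.
Hypothesis Psucc : forall x args, P cSucc (x :: args) x.+1.
Hypothesis Pproj : forall i args, i < size args -> P (cProj i) args (nth 0 args i).
Hypothesis Poracle : forall x args v, f x = Some v -> P cOracle (x :: args) v.
Hypothesis Pcomp : forall g hs args ys v, evals f hs args ys -> Q hs args ys ->
  eval f g ys v -> P g ys v -> P (cComp g hs) args v.
Hypothesis Pprec0 : forall b s args v,
  eval f b args v -> P b args v -> P (cPrec b s) (0 :: args) v.
Hypothesis PprecS : forall b s n args w v,
  eval f (cPrec b s) (n :: args) w -> P (cPrec b s) (n :: args) w ->
  eval f s (n :: w :: args) v -> P s (n :: w :: args) v ->
  P (cPrec b s) (n.+1 :: args) v.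
Hypothesis Pmu : forall g n args, eval f g (n :: args) 0 -> P g (n :: args) 0 ->
  (forall m, m < n -> exists k, eval f g (m :: args) k.+1 /\ P g (m :: args) k.+1) ->
  P (cMu g) args n.
Hypothesis Qnil : forall args, Q [::] args [::].
Hypothesis Qcons : forall h hs args y ys, eval f h args y -> P h args y ->
  evals f hs args ys -> Q hs args ys -> Q (h :: hs) args (y :: ys).

Fixpoint eval_mut_ind c args v (H : eval f c args v) {struct H} : P c args v :=
  match H in eval _ c args v return P c args v with
  | ev_zero args => Pzero args
  | ev_succ x args => Psucc x args
  | ev_proj i args Hi => Pproj Hi
  | ev_oracle x args v Hx => Poracle args Hx
  | ev_comp g hs args ys v Hs Hg =>
      Pcomp Hs (evals_mut_ind Hs) Hg (eval_mut_ind Hg)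
  | ev_prec0 b s args v Hb => Pprec0 s Hb (eval_mut_ind Hb)
  | ev_precS b s n args w v H1 H2 =>
      PprecS H1 (eval_mut_ind H1) H2 (eval_mut_ind H2)
  | ev_mu g n args H0 Hm => Pmu H0 (eval_mut_ind H0)
      (fun m lt_mn => match Hm m lt_mn with
                      | ex_intro k Hk => ex_intro _ k (conj Hk (eval_mut_ind Hk))
                      end)
  end
with evals_mut_ind hs args ys (H : evals f hs args ys) {struct H} : Q hs args ys :=
  match H in evals _ hs args ys return Q hs args ys with
  | evs_nil args => Qnil args
  | evs_cons h hs args y ys Hh Hhs =>
      Qcons Hh (eval_mut_ind Hh) Hhs (evals_mut_ind Hhs)
  end.
End EvalInduction.

Definition loop_code := cMu cSucc.

Section EvalInversion.
Variable f : pfun.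

Lemma eval_zeroE args v : eval f cZero args v <-> v = 0.
Proof. by split=> [H|->]; [inversion H | exact: ev_zero]. Qed.

Lemma eval_projE i args v :
  eval f (cProj i) args v <-> i < size args /\ v = nth 0 args i.
Proof. by split=> [H|[Hi ->]]; [inversion H | exact: ev_proj]. Qed.

Lemma eval_compE g hs args v :
  eval f (cComp g hs) args v <-> exists2 ys, evals f hs args ys & eval f g ys v.
Proof.
by split=> [H|[ys Hs Hg]]; [inversion H; eauto | exact: ev_comp Hs Hg].
Qed.

Lemma evals_nilE args ys : evals f [::] args ys <-> ys = [::].
Proof. by split=> [H|->]; [inversion H | exact: evs_nil]. Qed.

Lemma evals_consE h hs args ys : evals f (h :: hs) args ys <->
  exists y ys', [/\ ys = y :: ys', eval f h args y & evals f hs args ys'].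
Proof.
split=> [H|[y [ys' [-> Hh Hhs]]]]; last exact: evs_cons Hh Hhs.
by inversion H; do 2 eexists; split; eauto.
Qed.

Lemma eval_prec0E b s args v : eval f (cPrec b s) (0 :: args) v <-> eval f b args v.
Proof. by split=> [H|]; [inversion H | exact: ev_prec0]. Qed.

Lemma eval_precSE b s n args v : eval f (cPrec b s) (n.+1 :: args) v <->
  exists w, eval f (cPrec b s) (n :: args) w /\ eval f s (n :: w :: args) v.
Proof.
by split=> [H|[w [H1 H2]]]; [inversion H; eauto | exact: ev_precS H1 H2].
Qed.

Lemma eval_mu_root g args n : eval f (cMu g) args n -> eval f g (n :: args) 0.
Proof. by move=> H; inversion H. Qed.

Lemma evals_nth hs args ys : size ys = size hs ->
  (forall i, i < size hs -> eval f (nth cZero hs i) args (nth 0 ys i)) ->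
  evals f hs args ys.
Proof.
elim: hs ys => [|h hs IH] [|y ys] //= size_ys H; first exact: evs_nil.
apply: evs_cons; first exact: (H 0).
by apply: IH => [|i]; [case: size_ys | apply: (H i.+1)].
Qed.

Lemma eval_det c args v1 v2 : eval f c args v1 -> eval f c args v2 -> v1 = v2.
Proof.
move=> H; move: c args v1 H v2.
apply: (@eval_mut_ind f _ (fun hs args ys => forall ys', evals f hs args ys' -> ys = ys')).
- by move=> args v2 /eval_zeroE.
- by move=> x args v2 H; inversion H.
- by move=> i args _ v2 /eval_projE[].
- by move=> x args v Hx v2 H; inversion H; congruence.
- move=> g hs args ys v _ IHs _ IHg v2 /eval_compE[ys' /IHs <-]; exact: IHg.
- by move=> b s args v _ IHb v2 /eval_prec0E; apply: IHb.
- by move=> b s n args w v _ IH1 _ IH2 v2 /eval_precSE[w' [/IH1 <- /IH2]].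
- move=> g n args _ IH0 Hlt v2 H; inversion H; subst.
  case: (ltngtP n v2) => // ltn.
  + by case: (H2 _ ltn) => k /IH0.
  + by case: (Hlt _ ltn) => k [_ /(_ _ H1)].
- by move=> args ys' /evals_nilE.
- by move=> h hs args y ys _ IHh _ IHhs ys' /evals_consE[y' [ys'' [-> /IHh <- /IHhs <-]]].
Qed.

Lemma eval_loop_code args v : ~ eval f loop_code args v.
Proof. by move=> H; inversion H; match goal with H0 : eval _ cSucc _ 0 |- _ => inversion H0 end. Qed.

End EvalInversion.

(** * Relativization *)

Fixpoint relativize (c D : code) : code :=
  match c with
  | cOracle => cComp D [:: cProj 0]
  | cComp g hs => cComp (relativize g D) (map (relativize^~ D) hs)
  | cPrec b s => cPrec (relativize b D) (relativize s D)
  | cMu g => cMu (relativize g D)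
  | c => c
  end.

Section Relativization.
Variables (f g : pfun) (D : code).
Hypothesis gD : forall x v, g x = Some v <-> eval f D [:: x] v.

Lemma eval_relativize_of c args v : eval g c args v -> eval f (relativize c D) args v.
Proof.
move: c args v.
apply: (@eval_mut_ind g _ (fun hs args ys => evals f (map (relativize^~ D) hs) args ys)) => /=.
- by move=> *; apply: ev_zero.
- by move=> *; apply: ev_succ.
- by move=> *; apply: ev_proj.
- move=> x args v /gD Dx; apply: ev_comp Dx.
  by apply: evs_cons; [apply: (@ev_proj _ 0 (x :: args)) | apply: evs_nil].
- by move=> *; apply: ev_comp; eassumption.
- by move=> *; apply: ev_prec0.
- by move=> *; apply: ev_precS; eassumption.
- move=> h n args _ H0 Hlt; apply: ev_mu => // m lt_mn.
  by case: (Hlt m lt_mn) => k [_ Hk]; exists k.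
- by move=> *; apply: evs_nil.
- by move=> *; apply: evs_cons.
Qed.

Lemma eval_of_relativize c' args v :
  eval f c' args v -> forall c, c' = relativize c D -> eval g c args v.
Proof.
move: c' args v.
apply: (@eval_mut_ind f (fun c' args v => forall c, c' = relativize c D -> eval g c args v)
  (fun hs' args ys => forall hs, hs' = map (relativize^~ D) hs -> evals g hs args ys)).
- by move=> args [] // _; apply: ev_zero.
- by move=> x args [] // _; apply: ev_succ.
- by move=> i args Hi [] //= j [<-]; apply: ev_proj.
- by move=> x args v _ [].
- move=> h hs args ys v Hs IHs Hh IHh [] //=.
  + move=> [Eh Ehs]; rewrite {}Ehs in Hs; subst h.
    move/evals_consE: Hs Hh => [y [_ [-> /eval_projE[size_args ->] /evals_nilE ->]]].
    by case: args size_args {IHs IHh} => // x args _ Dv; apply/ev_oracle/gD.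
  + by move=> g' hs' [Eg Ehs]; apply: ev_comp (IHs _ Ehs) (IHh _ Eg).
- by move=> b s args v _ IHb [] //= b' s' [Eb _]; apply/ev_prec0/IHb.
- move=> b s n args w v _ IH1 _ IH2 [] //= b' s' [Eb Es].
  by apply: ev_precS; [apply: IH1; rewrite Eb Es | apply: IH2].
- move=> h n args _ IH0 Hlt [] //= h' [Eh]; apply: ev_mu; first exact: IH0.
  by move=> m lt_mn; case: (Hlt m lt_mn) => k [_ Hk]; exists k; apply: Hk.
- by move=> args [] // _; apply: evs_nil.
- move=> h hs args y ys _ IHh _ IHhs [] //= h' hs' [Eh Ehs].
  exact: evs_cons (IHh _ Eh) (IHhs _ Ehs).
Qed.

Lemma eval_relativize c args v : eval g c args v <-> eval f (relativize c D) args v.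
Proof. by split=> [|/eval_of_relativize]; [apply: eval_relativize_of | apply]. Qed.

End Relativization.

Lemma BZ_inj Z (a b : BZ Z) : sval a = sval b -> a = b.
Proof. by case: a b => p Hp [q Hq] /= Epq; subst q; congr exist; apply: proof_irrelevance. Qed.

Lemma Zcomputable_code Z (p : pfun) : Zcomputable Z p <->
  exists D, forall x v, p x = Some v <-> eval (chi Z) D [:: x] v.
Proof.
split=> [[e pe]|[D pD]]; last by exists (pickle D) => x v; rewrite /Phi pickleK.
move: pe; rewrite /Phi; case: (unpickle e) => [D|] pe; first by exists D.
by exists loop_code => x v; split=> [/pe|/eval_loop_code].
Qed.

Lemma Zcomputable_turing_le X Y p : turing_le X Y -> Zcomputable X p -> Zcomputable Y p.
Proof.
move=> /Zcomputable_code[D XD] /Zcomputable_code[c pc].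
by apply/Zcomputable_code; exists (relativize c D) => x v; rewrite pc; apply: eval_relativize.
Qed.

Lemma embedding_of_turing_le X Y : turing_le X Y -> exists f : BZ X -> BZ Y, pca_embedding f.
Proof.
move=> leXY; exists (fun a => exist _ (sval a) (Zcomputable_turing_le leXY (svalP a))).
split=> [a b Eab | //]; exact/BZ_inj/(f_equal sval Eab).
Qed.

(** * Primitive recursive expressions *)

Inductive pexp : Type :=
| PVar of nat | PCst of nat | PSucc of pexp | PPred of pexp | POrc of pexp
| PLet of pexp & pexp | PSum of pexp & pexp | PIter of pexp & pexp & pexp.

(* Variables are de Bruijn indices into the environment (unbound ones read 0);
   [PLet a b], [PSum n b] and [PIter n g x] bind variable 0 in [b], resp. [g],
   to the value of [a], the summation index, and the accumulator. *)
Fixpoint peval (o : nat -> nat) (env : seq nat) (e : pexp) : nat :=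
  match e with
  | PVar j => nth 0 env j
  | PCst n => n
  | PSucc a => (peval o env a).+1
  | PPred a => (peval o env a).-1
  | POrc a => o (peval o env a)
  | PLet a b => peval o (peval o env a :: env) b
  | PSum n b => \sum_(0 <= i < peval o env n) peval o (i :: env) b
  | PIter n g x => iter (peval o env n) (fun acc => peval o (acc :: env) g) (peval o env x)
  end.

Definition add_code := cPrec (cProj 0) (cComp cSucc [:: cProj 1]).
Definition proj_codes s k := map cProj (iota s k).
Definition const_code n := iter n (fun c => cComp cSucc [:: c]) cZero.

(* [compile k e] expects an environment of size [k] as its argument list. *)
Fixpoint compile (k : nat) (e : pexp) : code :=
  match e with
  | PVar j => if j < k then cProj j else cZero
  | PCst n => const_code n
  | PSucc a => cComp cSucc [:: compile k a]
  | PPred a => cComp (cPrec cZero (cProj 0)) [:: compile k a]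
  | POrc a => cComp cOracle [:: compile k a]
  | PLet a b => cComp (compile k.+1 b) (compile k a :: proj_codes 0 k)
  | PSum n b => cComp (cPrec cZero (cComp add_code
                   [:: cProj 1; cComp (compile k.+1 b) (cProj 0 :: proj_codes 2 k)]))
                 (compile k n :: proj_codes 0 k)
  | PIter n g x => cComp (cPrec (compile k x) (cComp (compile k.+1 g) (cProj 1 :: proj_codes 2 k)))
                 (compile k n :: proj_codes 0 k)
  end.

Section Compilation.
Variable o : nat -> nat.
Local Notation ev := (eval (Some \o o)).

Lemma eval_add_code a b args : ev add_code (a :: b :: args) (a + b).
Proof.
elim: a => [|a IH]; first exact: (@ev_prec0 _ _ _ _ _ (@ev_proj _ 0 (b :: args) erefl)).
rewrite addSn; apply: ev_precS IH _.
apply: ev_comp (ev_succ _ _ _).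
by apply: evs_cons (evs_nil _ _); apply: (@ev_proj _ 1 (a :: (a + b) :: b :: args)).
Qed.

Lemma evals_proj_codes s k args : s + k <= size args ->
  evals (Some \o o) (proj_codes s k) args [seq nth 0 args j | j <- iota s k].
Proof.
elim: k s => [|k IH] s le_sk_args /=; first exact: evs_nil.
by apply: evs_cons; [apply: ev_proj | apply: IH]; lia.
Qed.

Lemma map_nth_iota2 a b (env : seq nat) :
  [seq nth 0 (a :: b :: env) j | j <- iota 2 (size env)] = env.
Proof.
rewrite -[2]/(2 + 0) iotaDl -map_comp -[RHS](mkseq_nth 0 env).
exact: eq_map.
Qed.

Lemma eval_const_code n args : ev (const_code n) args n.
Proof.
elim: n => [|n IH] /=; first exact: ev_zero.
exact: ev_comp (evs_cons IH (evs_nil _ _)) (ev_succ _ _ _).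
Qed.

Lemma evals_proj_env env : evals (Some \o o) (proj_codes 0 (size env)) env env.
Proof. by rewrite -[X in evals _ _ _ X](mkseq_nth 0 env); apply: evals_proj_codes. Qed.

Lemma eval_comp1 c a args x v : ev a args x -> ev c [:: x] v -> ev (cComp c [:: a]) args v.
Proof. by move=> Ha; apply: ev_comp; apply: evs_cons Ha (evs_nil _ _). Qed.

Lemma eval_compile e env : ev (compile (size env) e) env (peval o env e).
Proof.
elim: e env => [j|n|a IH|a IH|a IH|a IHa b IHb|n IHn b IHb|n IHn g IHg x IHx] env /=;
  have proj_env := evals_proj_env env.
- case: ltnP => ltj; first exact: ev_proj.
  by rewrite nth_default //; apply: ev_zero.
- exact: eval_const_code.
- exact: eval_comp1 (IH env) (ev_succ _ _ _).
- apply: eval_comp1 (IH env) _.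
  elim: (peval o env a) => [|m IHm]; first exact: ev_prec0 (ev_zero _ _).
  exact: ev_precS IHm (@ev_proj _ 0 [:: m; m.-1] _).
- exact: eval_comp1 (IH env) (ev_oracle _ erefl).
- apply: ev_comp (evs_cons (IHa env) proj_env) _.
  exact: (IHb (_ :: env)).
- apply: ev_comp (evs_cons (IHn env) proj_env) _.
  elim: (peval o env n) => [|m IHm]; first by rewrite big_geq //; apply: ev_prec0; apply: ev_zero.
  rewrite big_nat_recr //=; apply: ev_precS IHm _.
  apply: ev_comp (eval_add_code _ _ [::]).
  apply: evs_cons; first exact: (@ev_proj _ 1 (m :: _ :: env)).
  apply: evs_cons (evs_nil _ _).
  apply: ev_comp; first apply: evs_cons; first exact: (@ev_proj _ 0 (m :: _ :: env)).
    exact: evals_proj_codes.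
  by rewrite map_nth_iota2; apply: (IHb (m :: env)).
- apply: ev_comp (evs_cons (IHn env) proj_env) _.
  elim: (peval o env n) => [|m IHm] /=; first exact: ev_prec0 (IHx env).
  apply: ev_precS IHm _.
  apply: ev_comp; first apply: evs_cons; first exact: (@ev_proj _ 1 (m :: _ :: env)).
    exact: evals_proj_codes.
  by rewrite map_nth_iota2; apply: (IHg (_ :: env)).
Qed.

Lemma eval_compileE e env v :
  ev (compile (size env) e) env v <-> v = peval o env e.
Proof. by split=> [/eval_det|->]; [apply; apply: eval_compile | apply: eval_compile]. Qed.

End Compilation.

Fixpoint lift (c : nat) (e : pexp) : pexp :=
  match e with
  | PVar j => if j < c then PVar j else PVar j.+1
  | PCst n => PCst n
  | PSucc a => PSucc (lift c a)
  | PPred a => PPred (lift c a)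
  | POrc a => POrc (lift c a)
  | PLet a b => PLet (lift c a) (lift c.+1 b)
  | PSum n b => PSum (lift c n) (lift c.+1 b)
  | PIter n g x => PIter (lift c n) (lift c.+1 g) (lift c x)
  end.

Notation up e := (lift 0 e).

Lemma peval_lift o e c env x : c <= size env ->
  peval o (take c env ++ x :: drop c env) (lift c e) = peval o env e.
Proof.
elim: e c env => [j|n|a IH|a IH|a IH|a IHa b IHb|n IHn b IHb|n IHn g IHg y IHy] c env le_c /=.
- rewrite fun_if /= !nth_cat size_take_min (minn_idPl le_c).
  case: ltnP => ltj; first by rewrite nth_take.
  by rewrite ltnNge ltnW //= subSn //= nth_drop subnKC.
- by [].
- by rewrite IH.
- by rewrite IH.
- by rewrite IH.
- by rewrite IHa // (IHb c.+1 (_ :: env)).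
- by rewrite IHn //; apply: eq_bigr => i _; rewrite (IHb c.+1 (_ :: env)).
- by rewrite IHn // IHy //; apply: eq_iter => z; rewrite (IHg c.+1 (_ :: env)).
Qed.

Lemma peval_up o e env x : peval o (x :: env) (up e) = peval o env e.
Proof. by have := @peval_lift o e 0 env x; rewrite take0 drop0; apply. Qed.

(* Booleans are coded as [0] (false) and any non-zero number (true). *)
Lemma nat_of_bool_neq0 (b : bool) : (b != 0 :> nat) = b.
Proof. by case: b. Qed.

Definition padd a b := PIter a (PSucc (PVar 0)) b.
Definition psub a b := PIter b (PPred (PVar 0)) a.
Definition pmul a b := PSum a (up b).
Definition pisz a := psub (PCst 1) a.
Definition pnz a := pisz (pisz a).
Definition peqn a b := pisz (padd (psub a b) (psub b a)).
Definition pleq a b := pisz (psub a b).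
Definition pltn a b := pleq (PSucc a) b.
Definition pand a b := pnz (pmul a b).
Definition por a b := pnz (padd a b).
Definition pif c a b := padd (pmul (pnz c) a) (pmul (pisz c) b).
Definition pall n b := pisz (PSum n (pisz b)).
Definition pex n b := pnz (PSum n (pnz b)).

Section MacroSemantics.
Variables (o : nat -> nat) (env : seq nat).
Local Notation D := (peval o env).

Lemma peval_var0 x : peval o (x :: env) (PVar 0) = x. Proof. by []. Qed.
Lemma peval_varS x j : peval o (x :: env) (PVar j.+1) = D (PVar j). Proof. by []. Qed.
Lemma peval_cst n : D (PCst n) = n. Proof. by []. Qed.
Lemma peval_succ a : D (PSucc a) = (D a).+1. Proof. by []. Qed.
Lemma peval_pred a : D (PPred a) = (D a).-1. Proof. by []. Qed.
Lemma peval_orc a : D (POrc a) = o (D a). Proof. by []. Qed.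
Lemma peval_let a b : D (PLet a b) = peval o (D a :: env) b. Proof. by []. Qed.

Lemma peval_sum n b : D (PSum n b) = \sum_(0 <= i < D n) peval o (i :: env) b.
Proof. by []. Qed.

Lemma peval_iter n g x :
  D (PIter n g x) = iter (D n) (fun acc => peval o (acc :: env) g) (D x).
Proof. by []. Qed.

Lemma peval_add a b : D (padd a b) = D a + D b.
Proof. by rewrite /= addnC -iter_succn; apply: eq_iter. Qed.

Lemma peval_sub a b : D (psub a b) = D a - D b.
Proof. by rewrite /=; elim: (D b) => [|n /= ->]; rewrite ?subn0 ?subnS. Qed.

Lemma peval_mul a b : D (pmul a b) = D a * D b.
Proof.
rewrite /= (eq_bigr (fun=> D b)) => [|i _]; last exact: peval_up.
by rewrite sum_nat_const_nat subn0.
Qed.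

Lemma peval_isz a : D (pisz a) = (D a == 0).
Proof. by rewrite peval_sub /=; case: (D a). Qed.

Lemma peval_nz a : D (pnz a) = (D a != 0).
Proof. by rewrite !peval_isz; case: (D a). Qed.

Lemma peval_eqn a b : D (peqn a b) = (D a == D b).
Proof. by rewrite peval_isz peval_add !peval_sub addn_eq0 !subn_eq0 -eqn_leq. Qed.

Lemma peval_leq a b : D (pleq a b) = (D a <= D b).
Proof. by rewrite peval_isz peval_sub subn_eq0. Qed.

Lemma peval_ltn a b : D (pltn a b) = (D a < D b).
Proof. exact: peval_leq. Qed.

Lemma peval_and a b : D (pand a b) = (D a != 0) && (D b != 0).
Proof. by rewrite peval_nz peval_mul muln_eq0 negb_or. Qed.

Lemma peval_or a b : D (por a b) = (D a != 0) || (D b != 0).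
Proof. by rewrite peval_nz peval_add addn_eq0 negb_and. Qed.

Lemma peval_if c a b : D (pif c a b) = if D c != 0 then D a else D b.
Proof. by rewrite peval_add !peval_mul peval_nz peval_isz; case: (D c) => * /=; lia. Qed.

End MacroSemantics.

Lemma peval_all o env n b (p : pred nat) : (forall i, peval o (i :: env) b = p i) ->
  peval o env (pall n b) = all p (iota 0 (peval o env n)).
Proof.
move=> bp; rewrite peval_isz peval_sum sum_nat_seq_eq0 /index_iota subn0.
by congr nat_of_bool; apply: eq_all => i; rewrite peval_isz bp !eqb0 negbK.
Qed.

Lemma peval_ex o env n b (p : pred nat) : (forall i, peval o (i :: env) b = p i) ->
  peval o env (pex n b) = has p (iota 0 (peval o env n)).
Proof.
move=> bp; rewrite peval_nz peval_sum sum_nat_seq_neq0 /index_iota subn0.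
by congr nat_of_bool; apply: eq_has => i; rewrite peval_nz bp /= !eqb0 !negbK.
Qed.

(** * Coding pairs and sequences *)

Definition tri s := \sum_(0 <= i < s) i.+1.
Definition cdiag z := \sum_(0 <= i < z.+1) (tri i.+1 <= z).
Definition cpair a b := tri (a + b) + a.
Definition cfst z := z - tri (cdiag z).
Definition csnd z := cdiag z - cfst z.

Lemma tri0 : tri 0 = 0.
Proof. exact: big_geq. Qed.

Lemma triS s : tri s.+1 = tri s + s.+1.
Proof. exact: big_nat_recr. Qed.

Lemma leq_tri s : s <= tri s.
Proof. by elim: s => // s IH; rewrite triS; lia. Qed.

Lemma tri_mono s t : s <= t -> tri s <= tri t.
Proof.
move=> le_st; rewrite -(subnKC le_st); elim: (t - s) => [|k IH]; first by rewrite addn0.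
by rewrite addnS triS; lia.
Qed.

Lemma sum_ltn n d : \sum_(0 <= i < n) (i < d) = minn n d.
Proof.
elim: n => [|n IH]; first by rewrite big_geq // min0n.
by rewrite big_nat_recr //= IH; case: ltnP => ?; lia.
Qed.

Lemma cdiag_eq d z : tri d <= z < tri d.+1 -> cdiag z = d.
Proof.
move=> /andP[le_dz lt_zd]; rewrite /cdiag (eq_bigr (fun i => nat_of_bool (i < d))) ?sum_ltn.
  by have := leq_tri d; lia.
move=> i _; case: ltnP => lt_id.
- by have := @tri_mono i.+1 d lt_id; lia.
- by have := @tri_mono d.+1 i.+1 lt_id; lia.
Qed.

Lemma cdiag_exists z : exists d, tri d <= z < tri d.+1.
Proof.
elim: z => [|z [d /andP[le_dz lt_zd]]]; first by exists 0; rewrite triS tri0.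
case: (ltnP z.+1 (tri d.+1)) => lt_zd'.
  by exists d; rewrite lt_zd' andbT; apply: leqW.
by exists d.+1; rewrite [tri d.+2]triS; apply/andP; split; lia.
Qed.

Lemma cfst_pair a b : cfst (cpair a b) = a.
Proof. by rewrite /cfst (@cdiag_eq (a + b)) /cpair ?triS; lia. Qed.

Lemma csnd_pair a b : csnd (cpair a b) = b.
Proof. by rewrite /csnd cfst_pair (@cdiag_eq (a + b)) /cpair ?triS; lia. Qed.

Lemma cpairK z : cpair (cfst z) (csnd z) = z.
Proof.
have [d zd] := cdiag_exists z; move: (zd) => /andP[le_dz]; rewrite triS => lt_zd.
rewrite /csnd /cfst (cdiag_eq zd) /cpair.
have ->: z - tri d + (d - (z - tri d)) = d by lia.
lia.
Qed.

Lemma leq_csnd_pair a b : b <= cpair a b.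
Proof. by rewrite /cpair; have := leq_tri (a + b); lia. Qed.

Lemma leq_csnd z : csnd z <= z.
Proof. by rewrite -{2}(cpairK z) leq_csnd_pair. Qed.

Lemma cpair00 : cpair 0 0 = 0. Proof. by rewrite /cpair tri0. Qed.
Lemma cfst0 : cfst 0 = 0. Proof. by rewrite -{1}cpair00 cfst_pair. Qed.
Lemma csnd0 : csnd 0 = 0. Proof. by rewrite -{1}cpair00 csnd_pair. Qed.

Definition ncons x l := (cpair x l).+1.
Definition nhead l := cfst l.-1.
Definition ntail l := csnd l.-1.
Definition ndrop n l := iter n ntail l.
Definition nnth l i := nhead (ndrop i l).
Definition nsize l := \sum_(0 <= i < l) (ndrop i l != 0).
Definition seq_code (s : seq nat) := foldr ncons 0 s.

Lemma nhead_cons x l : nhead (ncons x l) = x. Proof. exact: cfst_pair. Qed.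
Lemma ntail_cons x l : ntail (ncons x l) = l. Proof. exact: csnd_pair. Qed.

Lemma ntail_seq_code s : ntail (seq_code s) = seq_code (behead s).
Proof. by case: s => [|x s]; [apply: csnd0 | apply: ntail_cons]. Qed.

Lemma ndrop_seq_code i s : ndrop i (seq_code s) = seq_code (drop i s).
Proof.
elim: i s => [|i IH] s; first by rewrite drop0.
by rewrite /ndrop iterSr -/(ndrop _ _) ntail_seq_code IH -drop1 drop_drop addn1.
Qed.

Lemma nnth_seq_code s i : nnth (seq_code s) i = nth 0 s i.
Proof.
rewrite /nnth ndrop_seq_code -[i in RHS]addn0 -nth_drop.
by case: (drop i s) => [|x r]; [apply: cfst0 | apply: nhead_cons].
Qed.

Lemma size_le_seq_code s : size s <= seq_code s.
Proof. by elim: s => //= x s IH; have := leq_csnd_pair x (seq_code s); rewrite /ncons; lia. Qed.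

Lemma nsize_seq_code s : nsize (seq_code s) = size s.
Proof.
rewrite /nsize (eq_bigr (fun i => nat_of_bool (i < size s))) ?sum_ltn.
  by have := size_le_seq_code s; lia.
move=> i _; rewrite ndrop_seq_code.
by case: (drop i s) (size_drop i s) => [|x r] /=; lia.
Qed.

Lemma seq_code_surj l : exists s, seq_code s = l.
Proof.
elim/ltn_ind: l => -[|z] IH; first by exists [::].
have [s Es] := IH (csnd z) (leq_ltn_trans (leq_csnd z) (ltnSn z)).
by exists (cfst z :: s); rewrite /= Es /ncons cpairK.
Qed.

Lemma seq_code_nonnil s : seq_code s != 0 -> exists x r, s = x :: r.
Proof. by case: s => // x r _; exists x, r. Qed.

Definition ptri s := PSum s (PSucc (PVar 0)).
Definition pdiag z := PSum (PSucc z) (pleq (ptri (PSucc (PVar 0))) (up z)).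
Definition pfst z := PLet z (psub (PVar 0) (ptri (pdiag (PVar 0)))).
Definition psnd z := PLet z (psub (pdiag (PVar 0)) (pfst (PVar 0))).
Definition ppair a b := padd (ptri (padd a b)) a.
Definition pcons x l := PSucc (ppair x l).
Definition phead l := pfst (PPred l).
Definition ptail l := psnd (PPred l).
Definition pdrop n l := PIter n (ptail (PVar 0)) l.
Definition pnth l i := phead (pdrop i l).
Definition psize l := PLet l (PSum (PVar 0) (pnz (pdrop (PVar 0) (PVar 1)))).

Section CodingSemantics.
Variable o : nat -> nat.
Local Notation D env := (peval o env).

Lemma peval_tri env s : D env (ptri s) = tri (D env s).
Proof. by []. Qed.

Lemma peval_diag env z : D env (pdiag z) = cdiag (D env z).
Proof. by rewrite /pdiag peval_sum; apply: eq_bigr => i _; rewrite peval_leq peval_up. Qed.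

Lemma peval_fst env z : D env (pfst z) = cfst (D env z).
Proof. by rewrite /pfst peval_let peval_sub peval_tri peval_diag. Qed.

Lemma peval_snd env z : D env (psnd z) = csnd (D env z).
Proof. by rewrite /psnd peval_let peval_sub peval_diag peval_fst. Qed.

Lemma peval_pair env a b : D env (ppair a b) = cpair (D env a) (D env b).
Proof. by rewrite /ppair !peval_add peval_tri peval_add. Qed.

Lemma peval_cons env a b : D env (pcons a b) = ncons (D env a) (D env b).
Proof. by rewrite /pcons peval_succ peval_pair. Qed.

Lemma peval_head env l : D env (phead l) = nhead (D env l).
Proof. by rewrite /phead peval_fst. Qed.

Lemma peval_tail env l : D env (ptail l) = ntail (D env l).
Proof. by rewrite /ptail peval_snd. Qed.

Lemma peval_drop env n l : D env (pdrop n l) = ndrop (D env n) (D env l).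
Proof. by rewrite /pdrop peval_iter; apply: eq_iter => y; rewrite peval_tail. Qed.

Lemma peval_nth env l i : D env (pnth l i) = nnth (D env l) (D env i).
Proof. by rewrite /pnth peval_head peval_drop. Qed.

Lemma peval_size env l : D env (psize l) = nsize (D env l).
Proof. by rewrite /psize peval_let peval_sum; apply: eq_bigr => i _; rewrite peval_nz peval_drop. Qed.

End CodingSemantics.

(** * Computation traces *)

Fixpoint gnum (c : code) : nat :=
  match c with
  | cZero => cpair 0 0
  | cSucc => cpair 1 0
  | cProj i => cpair 2 i
  | cOracle => cpair 3 0
  | cComp g hs => cpair 4 (cpair (gnum g) (seq_code (map gnum hs)))
  | cPrec b s => cpair 5 (cpair (gnum b) (gnum s))
  | cMu g => cpair 6 (gnum g)
  end.

Definition code_tag c :=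
  match c with
  | cZero => 0 | cSucc => 1 | cProj _ => 2 | cOracle => 3
  | cComp _ _ => 4 | cPrec _ _ => 5 | cMu _ => 6
  end.

Definition code_body c :=
  match c with
  | cProj i => i
  | cComp g hs => cpair (gnum g) (seq_code (map gnum hs))
  | cPrec b s => cpair (gnum b) (gnum s)
  | cMu g => gnum g
  | _ => 0
  end.

Lemma cfst_gnum c : cfst (gnum c) = code_tag c. Proof. by case: c => *; apply: cfst_pair. Qed.
Lemma csnd_gnum c : csnd (gnum c) = code_body c. Proof. by case: c => *; apply: csnd_pair. Qed.

(* A trace is a coded list of entries [entry c a v w], each claiming that the
   code numbered [c] maps the argument list coded by [a] to [v].  The witness
   [w] codes the intermediate values of a composition, resp. the previous value
   of a primitive recursion. *)
Definition entry c a v w := cpair c (cpair a (cpair v w)).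
Definition ent_code e := cfst e.
Definition ent_args e := cfst (csnd e).
Definition ent_val e := cfst (csnd (csnd e)).
Definition ent_wit e := csnd (csnd (csnd e)).

Lemma entryK c a v w : let e := entry c a v w in
  [/\ ent_code e = c, ent_args e = a, ent_val e = v & ent_wit e = w].
Proof. by rewrite /ent_code /ent_args /ent_val /ent_wit /entry !csnd_pair !cfst_pair. Qed.

Definition claims c a v e := [&& ent_code e == c, ent_args e == a & ent_val e == v].
Definition claims_pos c a e := [&& ent_code e == c, ent_args e == a & 0 < ent_val e].

Definition trace_has T c a v := has (claims c a v \o nnth T) (iota 0 (nsize T)).
Definition trace_has_pos T c a := has (claims_pos c a \o nnth T) (iota 0 (nsize T)).

(* One step of the computation of the code numbered [c], of tag [t] and body
   [bd], justified by other claims of [T].  These concern subcodes of [c], or [c]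
   itself at a smaller recursion argument, so the justification is well founded. *)
Definition step_ok (o : nat -> nat) T t bd c a v w :=
  match t with
  | 0 => v == 0
  | 1 => (a != 0) && (v == (nhead a).+1)
  | 2 => (bd < nsize a) && (v == nnth a bd)
  | 3 => (a != 0) && (v == o (nhead a))
  | 4 => (nsize w == nsize (csnd bd)) &&
         (all (fun i => trace_has T (nnth (csnd bd) i) a (nnth w i)) (iota 0 (nsize (csnd bd)))
          && trace_has T (cfst bd) w v)
  | 5 => (a != 0) && (if nhead a == 0 then trace_has T (cfst bd) (ntail a) v
         else trace_has T c (ncons (nhead a).-1 (ntail a)) w &&
              trace_has T (csnd bd) (ncons (nhead a).-1 (ncons w (ntail a))) v)
  | 6 => trace_has T bd (ncons v a) 0 &&
         all (fun m => trace_has_pos T bd (ncons m a)) (iota 0 v)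
  | _ => false
  end.

Definition entry_ok o T e :=
  step_ok o T (cfst (ent_code e)) (csnd (ent_code e)) (ent_code e)
    (ent_args e) (ent_val e) (ent_wit e).

Definition trace_ok o T := all (entry_ok o T \o nnth T) (iota 0 (nsize T)).

Lemma entry_ok_entry o T c a v w :
  entry_ok o T (entry c a v w) = step_ok o T (cfst c) (csnd c) c a v w.
Proof. by rewrite /entry_ok; case: (entryK c a v w) => -> -> -> ->. Qed.

Lemma trace_has_pos_has T c a : trace_has_pos T c a -> exists2 v, 0 < v & trace_has T c a v.
Proof.
move=> /hasP[j jT /and3P[ec ea ev]]; exists (ent_val (nnth T j)) => //.
by apply/hasP; exists j => //=; rewrite /claims ec ea eqxx.
Qed.

Lemma foldr_and_nth (P : code -> Prop) hs :
  foldr (fun x acc => P x /\ acc) True hs -> forall i, i < size hs -> P (nth cZero hs i).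
Proof. by elim: hs => //= h hs IH [Ph Phs] [|i] //= /IH; apply. Qed.

Section Soundness.
Variables (o : nat -> nat) (T : nat).
Hypothesis okT : trace_ok o T.

Lemma trace_has_step c a v : trace_has T c a v -> exists w, step_ok o T (cfst c) (csnd c) c a v w.
Proof.
move=> /hasP[j jT /and3P[/eqP ec /eqP ea /eqP ev]].
by move/allP: okT => /(_ j jT); rewrite /= /entry_ok ec ea ev; exists (ent_wit (nnth T j)).
Qed.

Lemma trace_sound_prec b s :
  (forall args v, trace_has T (gnum b) (seq_code args) v -> eval (Some \o o) b args v) ->
  (forall args v, trace_has T (gnum s) (seq_code args) v -> eval (Some \o o) s args v) ->
  forall args v, trace_has T (gnum (cPrec b s)) (seq_code args) v ->
    eval (Some \o o) (cPrec b s) args v.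
Proof.
move=> IHb IHs args v Hc; have [w] := trace_has_step Hc.
rewrite cfst_gnum /= => /andP[/seq_code_nonnil[n [r Eargs]] _] {w}.
subst args; elim: n r v Hc => [|n IHn] args v /trace_has_step[w];
  rewrite cfst_gnum csnd_gnum /= nhead_cons ntail_cons /=.
- by rewrite cfst_pair => Hb; apply/ev_prec0/IHb.
- by rewrite csnd_pair => /andP[Hn Hs]; apply: ev_precS (IHn _ _ Hn) (IHs (n :: w :: args) v Hs).
Qed.

Lemma trace_sound c args v : trace_has T (gnum c) (seq_code args) v -> eval (Some \o o) c args v.
Proof.
elim/code_ind2: c args v => [||i||g hs IHg IHhs|b s IHb IHs|g IHg] args v Hc;
  have [w] := trace_has_step Hc; rewrite cfst_gnum csnd_gnum /=.
- by move/eqP->; apply: ev_zero.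
- case/andP=> /seq_code_nonnil[x [r ->]]; rewrite nhead_cons => /eqP->; exact: ev_succ.
- by case/andP; rewrite nsize_seq_code nnth_seq_code => Hi /eqP->; apply: ev_proj.
- by case/andP=> /seq_code_nonnil[x [r ->]]; rewrite nhead_cons => /eqP->; apply: ev_oracle.
- rewrite cfst_pair csnd_pair !nsize_seq_code size_map => /and3P[/eqP size_w /allP Hhs Hg].
  have [ys Ew] := seq_code_surj w; subst w.
  apply: ev_comp (IHg _ _ Hg); apply: evals_nth => [|i lt_i]; first by rewrite -size_w nsize_seq_code.
  have := Hhs i; rewrite mem_iota add0n !nnth_seq_code (nth_map cZero) // => /(_ lt_i).
  exact: (foldr_and_nth IHhs lt_i).
- by move=> _; apply: trace_sound_prec Hc.
- case/andP=> Hg /allP Hlt; apply: ev_mu => [|m lt_mv]; first exact: (IHg (v :: args)).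
  have := Hlt m; rewrite mem_iota add0n => /(_ lt_mv) /trace_has_pos_has[k k_gt0 Hk].
  by exists k.-1; rewrite prednK //; apply: (IHg (m :: args)).
Qed.

End Soundness.

Lemma has_seq_code (p : pred nat) L :
  has (p \o nnth (seq_code L)) (iota 0 (nsize (seq_code L))) = has p L.
Proof.
rewrite nsize_seq_code -[in RHS](mkseq_nth 0 L) has_map.
by apply: eq_has => j; rewrite /= nnth_seq_code.
Qed.

Lemma all_seq_code (p : pred nat) L :
  all (p \o nnth (seq_code L)) (iota 0 (nsize (seq_code L))) = all p L.
Proof.
rewrite nsize_seq_code -[in RHS](mkseq_nth 0 L) all_map.
by apply: eq_all => j; rewrite /= nnth_seq_code.
Qed.

Lemma step_ok_mono o T T' t bd c a v w :
  (forall c a v, trace_has T c a v -> trace_has T' c a v) ->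
  (forall c a, trace_has_pos T c a -> trace_has_pos T' c a) ->
  step_ok o T t bd c a v w -> step_ok o T' t bd c a v w.
Proof.
move=> TT' TT'pos; case: t => [|[|[|[|[|[|[|t]]]]]]] //=.
- case/and3P=> -> /allP Hall /TT' ->; rewrite andbT /=.
  by apply/allP => i /Hall /TT'.
- case/andP=> -> /=; case: ifP => _; first exact: TT'.
  by case/andP=> /TT' -> /TT' ->.
- by case/andP=> /TT' -> /allP Hall /=; apply/allP => m /Hall /TT'pos.
Qed.

Section Completeness.
Variable o : nat -> nat.
Local Notation okL L := (trace_ok o (seq_code L)).
Local Notation hasL L := (trace_has (seq_code L)).

Lemma hasL_sub L L' c a v : {subset L <= L'} -> hasL L c a v -> hasL L' c a v.
Proof. by rewrite /trace_has !has_seq_code => LL' /hasP[e /LL' eL' He]; apply/hasP; exists e. Qed.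

Lemma hasL_pos_sub L L' c a : {subset L <= L'} ->
  trace_has_pos (seq_code L) c a -> trace_has_pos (seq_code L') c a.
Proof. by rewrite /trace_has_pos !has_seq_code => LL' /hasP[e /LL' eL' He]; apply/hasP; exists e. Qed.

Lemma step_okL_sub L L' t bd c a v w : {subset L <= L'} ->
  step_ok o (seq_code L) t bd c a v w -> step_ok o (seq_code L') t bd c a v w.
Proof.
by move=> LL'; apply: step_ok_mono => *; [apply: hasL_sub LL' _ | apply: hasL_pos_sub LL' _].
Qed.

Lemma okL_nil : okL [::].
Proof. by rewrite /trace_ok all_seq_code. Qed.

Lemma entry_okL_sub L L' e : {subset L <= L'} ->
  entry_ok o (seq_code L) e -> entry_ok o (seq_code L') e.
Proof. exact: step_okL_sub. Qed.

Lemma okL_cat L1 L2 : okL L1 -> okL L2 -> okL (L1 ++ L2).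
Proof.
rewrite /trace_ok !all_seq_code all_cat => /allP ok1 /allP ok2.
apply/andP; split; apply/allP => e eL.
- exact: entry_okL_sub (mem_subseq (prefix_subseq _ _)) (ok1 e eL).
- exact: entry_okL_sub (mem_subseq (suffix_subseq _ _)) (ok2 e eL).
Qed.

Lemma hasL_pos L c a k : hasL L c a k.+1 -> trace_has_pos (seq_code L) c a.
Proof.
rewrite /trace_has /trace_has_pos !has_seq_code => /hasP[e eL /and3P[ec ea /eqP ev]].
by apply/hasP; exists e; rewrite // /claims_pos ec ea ev.
Qed.

Definition traced c args v := exists2 L, okL L & hasL L (gnum c) (seq_code args) v.

Definition traced_all hs args ys := size ys = size hs /\ exists2 L, okL L &
  forall i, i < size hs -> hasL L (gnum (nth cZero hs i)) (seq_code args) (nth 0 ys i).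

Lemma traced_of_step L c args v w : okL L ->
  step_ok o (seq_code L) (code_tag c) (code_body c) (gnum c) (seq_code args) v w ->
  traced c args v.
Proof.
set e := entry (gnum c) (seq_code args) v w => okL Hstep.
have sub_eL := mem_subseq (subseq_cons L e).
exists (e :: L).
  rewrite /trace_ok all_seq_code /= {1}/e entry_ok_entry cfst_gnum csnd_gnum.
  rewrite (step_okL_sub sub_eL Hstep) /=.
  move: okL; rewrite /trace_ok all_seq_code => /allP okL.
  by apply/allP => x /okL; apply: entry_okL_sub sub_eL.
rewrite /trace_has has_seq_code /= /claims /e.
by case: (entryK (gnum c) (seq_code args) v w) => -> -> -> _; rewrite !eqxx.
Qed.

Lemma traced_base c args v w :
  step_ok o 0 (code_tag c) (code_body c) (gnum c) (seq_code args) v w -> traced c args v.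
Proof. exact: (traced_of_step okL_nil). Qed.

Lemma traced_comp g hs args ys v :
  traced_all hs args ys -> traced g ys v -> traced (cComp g hs) args v.
Proof.
move=> [size_ys [L1 ok1 H1]] [L2 ok2 H2].
apply: (@traced_of_step (L1 ++ L2) _ _ _ (seq_code ys)); first exact: okL_cat.
rewrite /= cfst_pair csnd_pair !nsize_seq_code size_map size_ys eqxx /=.
apply/andP; split; last exact: hasL_sub (mem_subseq (suffix_subseq _ _)) H2.
apply/allP => i; rewrite mem_iota add0n => lt_i.
rewrite !nnth_seq_code (nth_map cZero) //.
exact: hasL_sub (mem_subseq (prefix_subseq _ _)) (H1 i lt_i).
Qed.

Lemma traced_prec0 b s args v : traced b args v -> traced (cPrec b s) (0 :: args) v.
Proof.
move=> [L okL H]; apply: (@traced_of_step L _ _ _ 0) => //.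
by rewrite /= nhead_cons ntail_cons /= cfst_pair.
Qed.

Lemma traced_precS b s n args w v : traced (cPrec b s) (n :: args) w ->
  traced s (n :: w :: args) v -> traced (cPrec b s) (n.+1 :: args) v.
Proof.
move=> [L1 ok1 H1] [L2 ok2 H2].
apply: (@traced_of_step (L1 ++ L2) _ _ _ w); first exact: okL_cat.
rewrite /= nhead_cons ntail_cons /= csnd_pair.
rewrite (hasL_sub (mem_subseq (prefix_subseq _ _)) H1).
by rewrite (hasL_sub (mem_subseq (suffix_subseq _ _)) H2).
Qed.

Lemma traced_collect n (P : nat -> seq nat -> Prop) :
  (forall m L L', {subset L <= L'} -> P m L -> P m L') ->
  (forall m, m < n -> exists2 L, okL L & P m L) ->
  exists2 L, okL L & forall m, m < n -> P m L.
Proof.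
move=> Pmono; elim: n => [|n IH] H; first by exists [::]; first exact: okL_nil.
have [L1 ok1 P1] := IH (fun m lt_mn => H m (ltnW lt_mn)).
have [L2 ok2 P2] := H n (ltnSn n).
exists (L1 ++ L2); first exact: okL_cat.
move=> m; rewrite ltnS leq_eqVlt => /orP[/eqP->|lt_mn].
- exact: Pmono (mem_subseq (suffix_subseq _ _)) P2.
- exact: Pmono (mem_subseq (prefix_subseq _ _)) (P1 _ lt_mn).
Qed.

Lemma traced_mu g n args : traced g (n :: args) 0 ->
  (forall m, m < n -> exists k, traced g (m :: args) k.+1) -> traced (cMu g) args n.
Proof.
move=> [L0 ok0 H0] Hlt.
have [L1 ok1 H1] := @traced_collect n
  (fun m L => trace_has_pos (seq_code L) (gnum g) (seq_code (m :: args)))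
  (fun m L L' LL' => hasL_pos_sub LL')
  (fun m lt_mn => let: ex_intro k (ex_intro2 L okL HL) := Hlt m lt_mn in
                  ex_intro2 _ _ L okL (hasL_pos HL)).
apply: (@traced_of_step (L0 ++ L1) _ _ _ 0); first exact: okL_cat.
apply/andP; split; first exact: hasL_sub (mem_subseq (prefix_subseq _ _)) H0.
apply/allP => m; rewrite mem_iota add0n => lt_mn.
exact: hasL_pos_sub (mem_subseq (suffix_subseq _ _)) (H1 m lt_mn).
Qed.

Lemma trace_complete c args v : eval (Some \o o) c args v -> traced c args v.
Proof.
move: c args v; apply: (@eval_mut_ind _ _ traced_all).
- by move=> args; apply: (@traced_base _ _ _ 0).
- by move=> x args; apply: (@traced_base _ _ _ 0); rewrite /= nhead_cons eqxx.
- move=> i args lt_i; apply: (@traced_base _ _ _ 0).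
  by rewrite /= nsize_seq_code nnth_seq_code lt_i eqxx.
- by move=> x args v [<-]; apply: (@traced_base _ _ _ 0); rewrite /= nhead_cons eqxx.
- by move=> g hs args ys v _ Hs _ Hg; apply: traced_comp Hs Hg.
- by move=> b s args v _ Hb; apply: traced_prec0 Hb.
- by move=> b s n args w v _ H1 _ H2; apply: traced_precS H1 H2.
- by move=> g n args _ H0 Hlt; apply: traced_mu H0 _ => m /Hlt[k [_ Hk]]; exists k.
- by move=> args; split=> //; exists [::]; first exact: okL_nil.
- move=> h hs args y ys _ [L1 ok1 H1] _ [size_ys [L2 ok2 H2]].
  split; first by rewrite /= size_ys.
  exists (L1 ++ L2); first exact: okL_cat.
  case=> [_|i lt_i].
  + exact: hasL_sub (mem_subseq (prefix_subseq _ _)) H1.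
  + exact: hasL_sub (mem_subseq (suffix_subseq _ _)) (H2 i lt_i).
Qed.

End Completeness.

Lemma step_okE o T t bd c a v w : step_ok o T t bd c a v w =
  [|| (t == 0) && (v == 0),
      (t == 1) && ((a != 0) && (v == (nhead a).+1)),
      (t == 2) && ((bd < nsize a) && (v == nnth a bd)),
      (t == 3) && ((a != 0) && (v == o (nhead a))),
      (t == 4) && ((nsize w == nsize (csnd bd)) &&
         (all (fun i => trace_has T (nnth (csnd bd) i) a (nnth w i)) (iota 0 (nsize (csnd bd)))
          && trace_has T (cfst bd) w v)),
      (t == 5) && ((a != 0) && (if nhead a == 0 then trace_has T (cfst bd) (ntail a) v
         else trace_has T c (ncons (nhead a).-1 (ntail a)) w &&
              trace_has T (csnd bd) (ncons (nhead a).-1 (ncons w (ntail a))) v))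
    | (t == 6) && (trace_has T bd (ncons v a) 0 &&
         all (fun m => trace_has_pos T bd (ncons m a)) (iota 0 v))].
Proof. by case: t => [|[|[|[|[|[|[|t]]]]]]] //=; rewrite ?orbF. Qed.

Definition pclaims C A V := pand (peqn (pfst (PVar 0)) (up C))
  (pand (peqn (pfst (psnd (PVar 0))) (up A)) (peqn (pfst (psnd (psnd (PVar 0)))) (up V))).
Definition pclaims_pos C A := pand (peqn (pfst (PVar 0)) (up C))
  (pand (peqn (pfst (psnd (PVar 0))) (up A)) (pltn (PCst 0) (pfst (psnd (psnd (PVar 0)))))).

Definition phas T C A V := pex (psize T) (PLet (pnth (up T) (PVar 0)) (pclaims (up C) (up A) (up V))).
Definition phas_pos T C A := pex (psize T) (PLet (pnth (up T) (PVar 0)) (pclaims_pos (up C) (up A))).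

Definition pstep T t bd c a v w :=
  por (pand (peqn t (PCst 0)) (peqn v (PCst 0)))
 (por (pand (peqn t (PCst 1)) (pand (pnz a) (peqn v (PSucc (phead a)))))
 (por (pand (peqn t (PCst 2)) (pand (pltn bd (psize a)) (peqn v (pnth a bd))))
 (por (pand (peqn t (PCst 3)) (pand (pnz a) (peqn v (POrc (phead a)))))
 (por (pand (peqn t (PCst 4)) (pand (peqn (psize w) (psize (psnd bd)))
        (pand (pall (psize (psnd bd))
                 (phas (up T) (pnth (psnd (up bd)) (PVar 0)) (up a) (pnth (up w) (PVar 0))))
              (phas T (pfst bd) w v))))
 (por (pand (peqn t (PCst 5)) (pand (pnz a) (pif (peqn (phead a) (PCst 0))
        (phas T (pfst bd) (ptail a) v)
        (pand (phas T c (pcons (PPred (phead a)) (ptail a)) w)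
              (phas T (psnd bd) (pcons (PPred (phead a)) (pcons w (ptail a))) v)))))
      (pand (peqn t (PCst 6)) (pand (phas T bd (pcons v a) (PCst 0))
        (pall v (phas_pos (up T) (up bd) (pcons (PVar 0) (up a))))))))))).

Definition pentry_ok T e :=
  pstep T (pfst (pfst e)) (psnd (pfst e)) (pfst e)
    (pfst (psnd e)) (pfst (psnd (psnd e))) (psnd (psnd (psnd e))).

Definition ptrace_ok T := pall (psize T) (pentry_ok (up T) (pnth (up T) (PVar 0))).

Section TraceCheckSemantics.
Variable o : nat -> nat.
Local Notation D env := (peval o env).

Lemma peval_has env T C A V : D env (phas T C A V) = trace_has (D env T) (D env C) (D env A) (D env V).
Proof.
rewrite /phas (@peval_ex _ _ _ _ (claims (D env C) (D env A) (D env V) \o nnth (D env T))) ?peval_size //.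
move=> i; rewrite peval_let peval_nth !peval_up /pclaims !peval_and !peval_eqn !peval_fst !peval_snd.
by rewrite !peval_up !nat_of_bool_neq0.
Qed.

Lemma peval_has_pos env T C A : D env (phas_pos T C A) = trace_has_pos (D env T) (D env C) (D env A).
Proof.
rewrite /phas_pos (@peval_ex _ _ _ _ (claims_pos (D env C) (D env A) \o nnth (D env T))) ?peval_size //.
move=> i; rewrite peval_let peval_nth !peval_up /pclaims_pos !peval_and peval_ltn !peval_eqn.
by rewrite !peval_fst !peval_snd !peval_up !nat_of_bool_neq0.
Qed.

Lemma peval_step env T t bd c a v w :
  D env (pstep T t bd c a v w) =
  step_ok o (D env T) (D env t) (D env bd) (D env c) (D env a) (D env v) (D env w).
Proof.
rewrite step_okE /pstep !peval_or !peval_and.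
rewrite (@peval_all _ _ _ _ (fun i => trace_has (D env T) (nnth (csnd (D env bd)) i)
  (D env a) (nnth (D env w) i))); last first.
  by move=> i; rewrite peval_has !peval_up !peval_nth !peval_snd !peval_up.
rewrite (@peval_all _ _ _ _ (fun m => trace_has_pos (D env T) (D env bd) (ncons m (D env a))));
  last by move=> i; rewrite peval_has_pos !peval_up !peval_cons !peval_up.
rewrite peval_if !peval_and !peval_has.
do 3 rewrite ?peval_eqn ?peval_nz ?peval_ltn ?peval_size ?peval_nth ?peval_head ?peval_tail
  ?peval_cons ?peval_pred ?peval_succ ?peval_orc ?peval_cst ?peval_fst ?peval_snd.
by rewrite !nat_of_bool_neq0; case: (nhead _ == 0); rewrite ?nat_of_bool_neq0.
Qed.

Lemma peval_entry_ok env T e : D env (pentry_ok T e) = entry_ok o (D env T) (D env e).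
Proof. by rewrite /pentry_ok peval_step; do 3 rewrite ?peval_fst ?peval_snd. Qed.

Lemma peval_trace_ok env T : D env (ptrace_ok T) = trace_ok o (D env T).
Proof.
rewrite /ptrace_ok (@peval_all _ _ _ _ (entry_ok o (D env T) \o nnth (D env T))) ?peval_size //.
by move=> i; rewrite peval_entry_ok peval_nth !peval_up.
Qed.

End TraceCheckSemantics.

(** * Codes for application in B^Z *)

Definition podd := PIter (PVar 0) (pisz (PVar 0)) (PCst 0).
Definition odd_code := compile 1 podd.
Definition even_code := compile 1 (pisz podd).
Definition half_code := compile 1 (PSum (PVar 0) podd).

Lemma peval_odd o x env : peval o (x :: env) podd = odd x.
Proof.
rewrite /podd peval_iter (eq_iter (f' := fun acc => nat_of_bool (acc == 0))) => [|y];
  last exact: peval_isz.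
by rewrite peval_var0 peval_cst; elim: x => //= x ->; case: (odd x).
Qed.

Lemma sum_odd x : \sum_(0 <= i < x) odd i = x./2.
Proof.
elim: x => [|x IH]; first by rewrite big_geq.
rewrite big_nat_recr //= IH -[in RHS](odd_double_half x).
by case: (odd x); rewrite /= ?uphalf_double ?doubleK; lia.
Qed.

(* [D] is only run when [t] answers [1]: the two halves of [join_code] must not
   diverge on each other's inputs. *)
Definition cond_half_code t D := cComp (cPrec cZero (cComp D [:: cProj 2])) [:: t; half_code].

Definition join_code dA dB :=
  cComp add_code [:: cond_half_code odd_code dB; cond_half_code even_code dA].

Section Join.
Variable o : nat -> nat.
Local Notation ev := (eval (Some \o o)).

Lemma eval_odd_code x : ev odd_code [:: x] (odd x).
Proof. by rewrite -(peval_odd o x [::]); apply: (eval_compile o podd [:: x]). Qed.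

Lemma eval_even_code x : ev even_code [:: x] (~~ odd x).
Proof.
have := eval_compile o (pisz podd) [:: x].
by rewrite peval_isz peval_odd; case: (odd x).
Qed.

Lemma eval_half_code x : ev half_code [:: x] x./2.
Proof.
have := eval_compile o (PSum (PVar 0) podd) [:: x].
rewrite peval_sum (eq_bigr (fun i => nat_of_bool (odd i))) ?sum_odd // => i _.
exact: peval_odd.
Qed.

Lemma eval_cond_half_code t D x v (b : bool) : ev t [:: x] b ->
  ev (cond_half_code t D) [:: x] v <-> if b then ev D [:: x./2] v else v = 0.
Proof.
move=> tx; split.
- move/eval_compE=> [ys /evals_consE[b' [ys' [-> tx' /evals_consE[h [_ [-> hx /evals_nilE ->]]]]]]].
  rewrite -(eval_det tx tx') -(eval_det (eval_half_code x) hx).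
  case: b {tx tx'} => [/eval_precSE[w [/eval_prec0E/eval_zeroE -> /eval_compE[zs]]]|].
  + by move=> /evals_consE[z [_ [-> /eval_projE[_ ->] /evals_nilE ->]]].
  + by move/eval_prec0E/eval_zeroE.
- move=> Hv; apply/eval_compE; exists [:: nat_of_bool b; x./2].
    exact: evs_cons tx (evs_cons (eval_half_code x) (evs_nil _ _)).
  case: b Hv {tx} => [Dv|->]; last exact/eval_prec0E/ev_zero.
  apply/eval_precSE; exists 0; split; first exact/eval_prec0E/ev_zero.
  apply/eval_compE; exists [:: x./2] => //.
  exact: evs_cons (@ev_proj _ 2 [:: 0; 0; x./2] _) (evs_nil _ _).
Qed.

Lemma eval_join_code dA dB x v :
  ev (join_code dA dB) [:: x] v <-> if odd x then ev dB [:: x./2] v else ev dA [:: x./2] v.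
Proof.
have oddx := eval_cond_half_code dB _ (eval_odd_code x).
have evenx := eval_cond_half_code dA _ (eval_even_code x).
split.
- move/eval_compE=> [ys /evals_consE[y1 [_ [-> H1 /evals_consE[y2 [_ [-> H2 /evals_nilE ->]]]]]]].
  move/(eval_det (eval_add_code o y1 y2 [::])) => <-.
  by move/oddx: H1; move/evenx: H2; case: (odd x) => /= [-> ?|? ->]; rewrite ?addn0.
- move=> Hv; apply/eval_compE.
  exists (if odd x then [:: v; 0] else [:: 0; v]); last first.
    by case: (odd x); [rewrite -[v in ev _ _ v]addn0 | ]; apply: eval_add_code.
  case: (odd x) oddx evenx Hv => oddx evenx Hv.
  + by apply: evs_cons (evs_cons _ (evs_nil _ _)); [apply/oddx | apply/evenx].
  + by apply: evs_cons (evs_cons _ (evs_nil _ _)); [apply/oddx | apply/evenx].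
Qed.

Lemma join_codeP gA gB dA dB :
  (forall x v, gA x = Some v <-> ev dA [:: x] v) ->
  (forall x v, gB x = Some v <-> ev dB [:: x] v) ->
  forall x v, pjoin gA gB x = Some v <-> ev (join_code dA dB) [:: x] v.
Proof. by move=> HA HB x v; rewrite eval_join_code /pjoin; case: (odd x). Qed.

End Join.

Definition app_code (S : pfun) dS D :=
  if S 0 is Some e then
    if unpickle e is Some c then relativize c (join_code dS D) else loop_code
  else loop_code.

Lemma app_codeP o S dS g D :
  (forall x v, S x = Some v <-> eval (Some \o o) dS [:: x] v) ->
  (forall x v, g x = Some v <-> eval (Some \o o) D [:: x] v) ->
  forall n v, appR S g n v <-> eval (Some \o o) (app_code S dS D) [:: n] v.
Proof.
move=> SdS gD n v; rewrite /appR /app_code /Phi.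
have relP := eval_relativize (join_codeP SdS gD).
case: (S 0) => [e|]; last by split=> [[e []] | /eval_loop_code].
split=> [[e' [[<-]]] | Hv].
- by case: (unpickle e) => [c /relP|].
- exists e; split=> //.
  by case: (unpickle e) Hv => [c /relP|/eval_loop_code].
Qed.

Definition pgcomp g hs := ppair (PCst 4) (ppair g (foldr pcons (PCst 0) hs)).
Definition pgprec b s := ppair (PCst 5) (ppair b s).

Fixpoint pgrelativize (c : code) (J : pexp) : pexp :=
  match c with
  | cOracle => pgcomp J [:: PCst (gnum (cProj 0))]
  | cComp g hs => pgcomp (pgrelativize g J) (map (pgrelativize^~ J) hs)
  | cPrec b s => pgprec (pgrelativize b J) (pgrelativize s J)
  | cMu g => ppair (PCst 6) (pgrelativize g J)
  | c => PCst (gnum c)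
  end.

Definition pgcond_half t h :=
  pgcomp (pgprec (PCst (gnum cZero)) (pgcomp h [:: PCst (gnum (cProj 2))]))
    [:: t; PCst (gnum half_code)].

Definition pgjoin dA h :=
  pgcomp (PCst (gnum add_code))
    [:: pgcond_half (PCst (gnum odd_code)) h; PCst (gnum (cond_half_code even_code dA))].

Definition pgapp (S : pfun) dS h :=
  if S 0 is Some e then
    if unpickle e is Some c then pgrelativize c (pgjoin dS h) else PCst (gnum loop_code)
  else PCst (gnum loop_code).

Section CodeNumbers.
Variables (o : nat -> nat) (env : seq nat).
Local Notation D := (peval o env).

Lemma peval_seq hs : D (foldr pcons (PCst 0) hs) = seq_code (map D hs).
Proof. by elim: hs => [|h hs IH] //; rewrite [foldr _ _ _]/= peval_cons IH. Qed.

Lemma peval_gcomp g hs G HS : D g = gnum G -> map D hs = map gnum HS ->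
  D (pgcomp g hs) = gnum (cComp G HS).
Proof. by move=> Dg Dhs; rewrite /pgcomp !peval_pair peval_seq Dg Dhs. Qed.

Lemma peval_gprec b s B S : D b = gnum B -> D s = gnum S -> D (pgprec b s) = gnum (cPrec B S).
Proof. by move=> Db Ds; rewrite /pgprec !peval_pair Db Ds. Qed.

Lemma peval_grelativize c J DJ : D J = gnum DJ -> D (pgrelativize c J) = gnum (relativize c DJ).
Proof.
move=> DJ_J; elim/code_ind2: c => [||i||g hs IHg IHhs|b s IHb IHs|g IHg] //.
- exact: peval_gcomp.
- apply: peval_gcomp IHg _; rewrite -!map_comp.
  by elim: hs IHhs => //= h hs IH [-> /IH ->].
- exact: peval_gprec.
- by rewrite [pgrelativize _ _]/= peval_pair IHg.
Qed.

Lemma peval_gjoin dA h DH : D h = gnum DH -> D (pgjoin dA h) = gnum (join_code dA DH).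
Proof.
move=> Dh; rewrite /pgjoin /pgcond_half.
apply: peval_gcomp => //; congr [:: _; _].
apply: peval_gcomp; last by congr [:: _; _].
by apply: peval_gprec => //; apply: peval_gcomp.
Qed.

Lemma peval_gapp S dS h DH : D h = gnum DH -> D (pgapp S dS h) = gnum (app_code S dS DH).
Proof.
move=> Dh; rewrite /pgapp /app_code; case: (S 0) => [e|] //.
by case: (unpickle e) => [c|] //; apply/peval_grelativize/peval_gjoin.
Qed.

End CodeNumbers.

(** * From an embedding to a reduction *)

Lemma Zcomputable_pexp Z (E : pexp) p :
  (forall n, p n = Some (peval (nat_of_bool \o Z) [:: n] E)) -> Zcomputable Z p.
Proof.
move=> pE; apply/Zcomputable_code; exists (compile 1 E) => x v.
by rewrite pE (eval_compileE _ E [:: x]); split=> [[<-]|->].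
Qed.

Lemma is_app_pexp (phi psi c : pfun) o E :
  (forall x, pjoin phi psi x = Some (o x)) -> phi 0 = Some (pickle (compile 1 E)) ->
  (forall n, c n = Some (peval o [:: n] E)) -> is_app phi psi c.
Proof.
move=> phi_psi phi0 cE n v; rewrite cE /appR.
have -> : pjoin phi psi = Some \o o by apply: functional_extensionality.
split=> [[<-]|[e [He]]].
- by exists (pickle (compile 1 E)); rewrite /Phi pickleK (eval_compileE _ E [:: n]).
- by move: He; rewrite phi0 => -[<-]; rewrite /Phi pickleK (eval_compileE _ E [:: n]) => ->.
Qed.

Section ElementsOfBX.
Variable X : nat -> bool.

(* The oracle [pjoin phi psi] answers [psi 0] at [1] and [phi k] at [2 k]. *)
Definition psi0 := POrc (PCst 1).
Definition succ_code := compile 1 (PSucc psi0).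
Definition flip_code := compile 1 (POrc (padd (PSucc psi0) (PSucc psi0))).

Definition num_fun n : pfun := fun=> Some n.
Definition succ_fun : pfun := fun=> Some (pickle succ_code).
Definition flip_fun (b : bool) : pfun :=
  fun x => Some (if x is j.+1 then X j (+) b else pickle flip_code).

Lemma num_Zcomputable n : Zcomputable X (num_fun n).
Proof. by apply: (@Zcomputable_pexp _ (PCst n)) => x; rewrite peval_cst. Qed.

Lemma succ_Zcomputable : Zcomputable X succ_fun.
Proof. by apply: (@Zcomputable_pexp _ (PCst (pickle succ_code))) => x; rewrite peval_cst. Qed.

Lemma flip_Zcomputable b : Zcomputable X (flip_fun b).
Proof.
apply: (@Zcomputable_pexp _ (pif (PVar 0)
  (if b then pisz (POrc (PPred (PVar 0))) else POrc (PPred (PVar 0))) (PCst (pickle flip_code)))).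
rewrite /flip_fun; move: (pickle flip_code) => k.
case=> [|j]; rewrite peval_if peval_var0 //.
by case: b; rewrite ?peval_isz peval_orc peval_pred peval_var0 /=; case: (X j).
Qed.

Definition num n : BZ X := exist _ (num_fun n) (num_Zcomputable n).
Definition succ_elt : BZ X := exist _ succ_fun succ_Zcomputable.
Definition flip b : BZ X := exist _ (flip_fun b) (flip_Zcomputable b).

Lemma app_succ n : is_app (sval succ_elt) (sval (num n)) (sval (num n.+1)).
Proof.
apply: (@is_app_pexp _ _ _ (fun x => if odd x then n else pickle succ_code) (PSucc psi0)) => //.
by move=> x; rewrite /pjoin; case: (odd x).
Qed.

Lemma app_flip b n : is_app (sval (flip b)) (sval (num n)) (sval (num (X n (+) b))).
Proof.
apply: (@is_app_pexp _ _ _ (fun x => if odd x then n else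
  if x./2 is j.+1 then X j (+) b else pickle flip_code) (POrc (padd (PSucc psi0) (PSucc psi0)))) => //.
- by move=> x; rewrite /pjoin; case: (odd x).
- by move=> k; rewrite peval_orc peval_add !peval_succ !peval_orc peval_cst addnn odd_double doubleK.
Qed.

End ElementsOfBX.

Section EmbeddingImages.
Variables (X Y : nat -> bool) (f : BZ X -> BZ Y).
Hypothesis f_emb : pca_embedding f.
Local Notation oY := (nat_of_bool \o Y).
Local Notation ev := (eval (Some \o oY)).

Variables (dS d0 dF0 dF1 : code).
Hypothesis dSP : forall x v, sval (f (succ_elt X)) x = Some v <-> ev dS [:: x] v.
Hypothesis d0P : forall x v, sval (f (num X 0)) x = Some v <-> ev d0 [:: x] v.
Hypothesis dF0P : forall x v, sval (f (flip X false)) x = Some v <-> ev dF0 [:: x] v.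
Hypothesis dF1P : forall x v, sval (f (flip X true)) x = Some v <-> ev dF1 [:: x] v.

Definition dF (b : bool) := if b then dF1 else dF0.

Lemma dFP b x v : sval (f (flip X b)) x = Some v <-> ev (dF b) [:: x] v.
Proof. by case: b; [apply: dF1P | apply: dF0P]. Qed.

Definition num_image_code n := iter n (app_code (sval (f (succ_elt X))) dS) d0.

Lemma num_image_codeP n x v : sval (f (num X n)) x = Some v <-> ev (num_image_code n) [:: x] v.
Proof.
elim: n x v => [|n IH] x v; first exact: d0P.
by rewrite (f_emb.2 _ _ _ (app_succ X n)); apply: (app_codeP dSP IH).
Qed.

Definition flip_image_code b n := app_code (sval (f (flip X b))) (dF b) (num_image_code n).

Lemma flip_image_codeP b n x v :
  sval (f (num X (X n (+) b))) x = Some v <-> ev (flip_image_code b n) [:: x] v.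
Proof. by rewrite (f_emb.2 _ _ _ (app_flip X b n)); apply: (app_codeP (dFP b) (num_image_codeP n)). Qed.

Definition pnum_image_code nv :=
  PIter nv (pgapp (sval (f (succ_elt X))) dS (PVar 0)) (PCst (gnum d0)).

Lemma peval_num_image_code env nv :
  peval oY env (pnum_image_code nv) = gnum (num_image_code (peval oY env nv)).
Proof.
rewrite /pnum_image_code peval_iter peval_cst /num_image_code.
by elim: (peval oY env nv) => //= k IH; apply: peval_gapp; rewrite peval_var0.
Qed.

Definition pflip_image_code b nv := pgapp (sval (f (flip X b))) (dF b) (pnum_image_code nv).

Lemma peval_flip_image_code env b nv :
  peval oY env (pflip_image_code b nv) = gnum (flip_image_code b (peval oY env nv)).
Proof. by apply: peval_gapp; rewrite peval_num_image_code. Qed.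

Variables (m w : nat) (bb : bool).
Hypothesis f_bb : sval (f (num X bb)) m = Some w.
Hypothesis f_nbb : sval (f (num X (~~ bb))) m <> Some w.

Definition witnesses T n := trace_ok oY T &&
  (trace_has T (gnum (flip_image_code false n)) (seq_code [:: m]) w ||
   trace_has T (gnum (flip_image_code true n)) (seq_code [:: m]) w).

Definition answer T n :=
  if trace_has T (gnum (flip_image_code false n)) (seq_code [:: m]) w then bb else ~~ bb.

Lemma witnesses_answer T n : witnesses T n -> answer T n = X n.
Proof.
have Xn_bb b : ev (flip_image_code b n) [:: m] w -> X n = bb (+) b.
  move/flip_image_codeP; case: (X n); case: bb f_bb f_nbb; case: b => //= -> // ->.
case/andP=> okT; rewrite /answer; case: ifP => [found _|_ found].
- by rewrite (Xn_bb false (trace_sound okT found)) addbF.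
- by rewrite (Xn_bb true (trace_sound okT found)) addbT.
Qed.

Lemma witnesses_exist n : exists T, witnesses T n.
Proof.
have /flip_image_codeP/trace_complete[L okL HL] :
    sval (f (num X (X n (+) (X n (+) bb)))) m = Some w by rewrite addKb.
by exists (seq_code L); rewrite /witnesses okL; case: (X n (+) bb) HL => ->; rewrite ?orbT.
Qed.

Definition pwitnesses := pand (ptrace_ok (PVar 0))
  (por (phas (PVar 0) (pflip_image_code false (PVar 1)) (PCst (seq_code [:: m])) (PCst w))
       (phas (PVar 0) (pflip_image_code true (PVar 1)) (PCst (seq_code [:: m])) (PCst w))).

Definition panswer := pif (phas (PVar 0) (pflip_image_code false (PVar 1))
  (PCst (seq_code [:: m])) (PCst w)) (PCst bb) (PCst (~~ bb)).

Lemma peval_witnesses T n : peval oY [:: T; n] pwitnesses = witnesses T n.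
Proof.
rewrite /pwitnesses peval_and peval_or peval_trace_ok !peval_has !peval_flip_image_code.
by rewrite !peval_cst !peval_varS !peval_var0 !nat_of_bool_neq0.
Qed.

Lemma peval_answer T n : peval oY [:: T; n] panswer = answer T n.
Proof.
rewrite /panswer peval_if peval_has peval_flip_image_code !peval_cst !peval_varS !peval_var0.
by rewrite nat_of_bool_neq0 /answer; case: ifP.
Qed.

Definition decide_code :=
  cComp (compile 2 panswer) [:: cMu (compile 2 (pisz pwitnesses)); cProj 0].

Lemma eval_search T n : ev (compile 2 (pisz pwitnesses)) [:: T; n] (~~ witnesses T n).
Proof.
have := eval_compile oY (pisz pwitnesses) [:: T; n].
by rewrite peval_isz peval_witnesses; case: (witnesses T n).
Qed.

Lemma decide_codeP n v : ev decide_code [:: n] v <-> v = X n.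
Proof.
split.
- move/eval_compE=> [ys Hys].
  move/evals_consE: Hys => [T [ys1 [-> HT /evals_consE[n' [ys2 [-> /eval_projE[_ ->]]]]]]].
  move/evals_nilE=> -> /(eval_compileE oY panswer [:: T; n]) ->.
  rewrite peval_answer witnesses_answer //.
  move: (eval_det (eval_mu_root HT) (eval_search T n)).
  by case: (witnesses T n).
- move=> ->; have [T WT minT] := ex_minnP (witnesses_exist n).
  apply/eval_compE; exists [:: T; n].
  + apply: evs_cons; last exact: evs_cons (@ev_proj _ 0 [:: n] _) (evs_nil _ _).
    apply: ev_mu; first by have := eval_search T n; rewrite WT.
    move=> k lt_kT; exists 0; have := eval_search k n.
    by case Wk: (witnesses k n) => //; have := minT _ Wk; rewrite leqNgt lt_kT.
  + by have := eval_compile oY panswer [:: T; n]; rewrite peval_answer witnesses_answer.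
Qed.

End EmbeddingImages.

Lemma embedding_separates_nums X Y (f : BZ X -> BZ Y) : injective f ->
  exists (bb : bool) m w,
    sval (f (num X bb)) m = Some w /\ sval (f (num X (~~ bb))) m <> Some w.
Proof.
move=> f_inj; have f01 : f (num X 0) <> f (num X 1).
  by move/f_inj/(f_equal (fun a => sval a 0)).
have [m f01m] : exists m, sval (f (num X 0)) m <> sval (f (num X 1)) m.
  apply: NNPP => nex; apply/f01/BZ_inj/functional_extensionality => m.
  by apply: NNPP => ne; apply: nex; exists m.
case E0: (sval (f (num X 0)) m) f01m => [w|] f01m.
  by exists false, m, w; split=> // E1; apply: f01m; rewrite E1.
case E1: (sval (f (num X 1)) m) f01m => [w|] // _.
by exists true, m, w; rewrite /= E0.
Qed.

Lemma turing_le_of_embedding X Y : (exists f : BZ X -> BZ Y, pca_embedding f) -> turing_le X Y.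
Proof.
case=> f f_emb.
have [dS dSP] := (Zcomputable_code _ _).1 (svalP (f (succ_elt X))).
have [d0 d0P] := (Zcomputable_code _ _).1 (svalP (f (num X 0))).
have [dF0 dF0P] := (Zcomputable_code _ _).1 (svalP (f (flip X false))).
have [dF1 dF1P] := (Zcomputable_code _ _).1 (svalP (f (flip X true))).
have [bb [m [w [f_bb f_nbb]]]] := embedding_separates_nums f_emb.1.
apply/Zcomputable_code; exists (decide_code f dS d0 dF0 dF1 m w bb) => x v.
by rewrite (decide_codeP f_emb dSP d0P dF0P dF1P f_bb f_nbb); split=> [[<-]|->].
Qed.

Theorem theorem6p12 (X Y : nat -> bool) :
  (exists f : BZ X -> BZ Y, pca_embedding f) <-> turing_le X Y.
Proof. by split; [apply: turing_le_of_embedding | apply: embedding_of_turing_le]. Qed.
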